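(* Let $\mathbb{F}_Q$ be a prime field, $\mathbb{F}_Q^*=\mathbb{F}_Q\setminus\{0\}$, $\sigma,\beta\in\mathbb{N}$, and $H:\{0,1\}^\sigma\to\mathbb{F}_Q$ a function with no collisions on the inputs considered. An optimized OLE tuple is generated by drawing $s_A$ and $s_{B,1},\dots,s_{B,\beta}$ uniformly from $\mathbb{F}_Q$ and $r_{B,1},\dots,r_{B,\beta}$ uniformly from $\mathbb{F}_Q^*$, all independently, and setting $r_{A,j}=(s_A+s_{B,j})/r_{B,j}$ for $j=1,\dots,\beta$ (so $r_{A,j}r_{B,j}=s_A+s_{B,j}$); Alice receives $(s_A,r_{A,1},\dots,r_{A,\beta})$ and Bob receives $((s_{B,1},r_{B,1}),\dots,(s_{B,\beta},r_{B,\beta}))$. Alice holds one element $x\in\{0,1\}^\sigma$ and Bob holds elements $y_1,\dots,y_\beta\in\{0,1\}^\sigma$. In the set comparison protocol, Alice sends $c=s_A-H(x)$ to Bob; Bob sends $d_j=(c+H(y_j)+s_{B,j})/r_{B,j}$ for each $j$ to Alice; Alice learns for each $j$ whether $x=y_j$ by checking $d_j\stackrel{?}{=}r_{A,j}$. Then this set comparison protocol is secure in the semi-honest model: there exist simulators of Bob's view (from $y_1,\dots,y_\beta$ and his OLE share) and of Alice's view (from $x$, her OLE share and her output, namely which $j$ satisfy $x=y_j$) that are identically distributed to the respective real views.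
   Context: Semi-honest security: a party's view consists of its input, its correlated randomness and all messages it receives; a protocol is secure if each party's view can be simulated from that party's input and output alone. All arithmetic is in $\mathbb{F}_Q$. *)

From HB Require Import structures.
From mathcomp Require Import all_boot all_order all_algebra.
Set Implicit Arguments. Unset Strict Implicit. Unset Printing Implicit Defensive.
Import Order.TTheory GRing.Theory Num.Theory.
Local Open Scope ring_scope.

Section Protocol.
Variables (Q sigma beta : nat).
Local Notation F := 'F_Q.
Local Notation Bits := (sigma.-tuple bool).

Definition Omega : finType :=
  (F * {ffun 'I_beta -> F} * {ffun 'I_beta -> F})%type.

Definition sA (w : Omega) : F := w.1.1.
Definition sB (w : Omega) : {ffun 'I_beta -> F} := w.1.2.
Definition rB (w : Omega) : {ffun 'I_beta -> F} := w.2.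

(* r_{B,j} is drawn from F_Q^* : the support of the (uniform, independent)
   draws is the set of w with all r_{B,j} nonzero. *)
Definition valid_rand (w : Omega) : bool := [forall j, rB w j != 0].

Definition ole_A (w : Omega) : F * {ffun 'I_beta -> F} :=
  (sA w, [ffun j => (sA w + sB w j) / rB w j]).
Definition ole_B (w : Omega) : {ffun 'I_beta -> F} * {ffun 'I_beta -> F} :=
  (sB w, rB w).

Definition msg_c (H : Bits -> F) (x : Bits) (w : Omega) : F := sA w - H x.
Definition msg_d (H : Bits -> F) (x : Bits) (ys : {ffun 'I_beta -> Bits})
  (w : Omega) : {ffun 'I_beta -> F} :=
  [ffun j => (msg_c H x w + H (ys j) + sB w j) / rB w j].

Definition alice_out (x : Bits) (ys : {ffun 'I_beta -> Bits}) : {ffun 'I_beta -> bool} :=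
  [ffun j => x == ys j].

Definition ViewA : finType :=
  (Bits * (F * {ffun 'I_beta -> F}) * {ffun 'I_beta -> F})%type.
Definition ViewB : finType :=
  ({ffun 'I_beta -> Bits} * ({ffun 'I_beta -> F} * {ffun 'I_beta -> F}) * F)%type.

Definition view_alice H x ys (w : Omega) : ViewA := (x, ole_A w, msg_d H x ys w).
Definition view_bob H x ys (w : Omega) : ViewB := (ys, ole_B w, msg_c H x w).

Definition prob_real (V : finType) (f : Omega -> V) (v : V) : rat :=
  (#|[set w | valid_rand w && (f w == v)]|%:R / #|[set w | valid_rand w]|%:R).

Definition no_collision (H : Bits -> F) (x : Bits) (ys : {ffun 'I_beta -> Bits}) : Prop :=
  forall u v, u \in x :: codom ys -> v \in x :: codom ys -> H u = H v -> u = v.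

End Protocol.

Definition is_distr (V : finType) (p : {ffun V -> rat}) : Prop :=
  (forall v, 0 <= p v) /\ \sum_(v : V) p v = 1.

From HB Require Import structures.
From mathcomp Require Import all_boot all_order all_algebra.
From mathcomp Require Import ring.
Import Order.TTheory GRing.Theory Num.Theory.
Local Open Scope ring_scope.

Set Implicit Arguments. Unset Strict Implicit.

(* Both simulators run the real protocol on fresh randomness, with the
   unknown data replaced by harmless constants; each real view is the
   simulated one composed with a bijection of the randomness that preserves
   its support [valid_rand], hence both have the same distribution.
   For Bob, [c = s_A - H x] is a one-time pad: translating [s_A] by [H x]
   turns it into [s_A].  For Alice, writing [e_j = H y_j - H x], the message
   is [d_j = r_{A,j} + e_j / r_{B,j}]; when [x <> y_j] no collision gives
   [e_j <> 0], and dividing both [s_A + s_{B,j}] and [r_{B,j}] by [e_j]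
   keeps [r_{A,j}] while replacing [e_j] by [1].  So Alice's view depends
   only on which [e_j] vanish, i.e. on her output. *)

Lemma div_common_scale (F : fieldType) (a b r e : F) :
  e != 0 -> (a / e + b) / (r / e) = (a + b * e) / r.
Proof. by move=> e_neq0; rewrite invf_div mulrA mulrDl divfK. Qed.

Section Simulation.
Variables Q sigma beta : nat.
Local Notation F := 'F_Q.
Local Notation Bits := (sigma.-tuple bool).
Local Notation Omega := (Omega Q beta).

Lemma card_valid_rand_gt0 : (0 < #|[set w : Omega | valid_rand w]|)%N.
Proof.
rewrite card_gt0; apply/set0Pn; exists (0, [ffun=> 0], [ffun=> 1]).
by rewrite inE; apply/forallP => j; rewrite /rB ffunE oner_neq0.
Qed.

Lemma prob_real_is_distr (V : finType) (f : Omega -> V) :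
  is_distr [ffun v => prob_real f v].
Proof.
split=> [v|]; first by rewrite ffunE divr_ge0 ?ler0n.
under eq_bigr do rewrite ffunE.
rewrite -mulr_suml -natr_sum.
have -> : (\sum_(v : V) #|[set w | valid_rand w && (f w == v)]|)%N
          = #|[set w : Omega | valid_rand w]|.
  rewrite -sum1_card (partition_big f predT) //=.
  by apply: eq_bigr => v _; rewrite -sum1_card; apply: eq_bigl => w; rewrite !inE.
by rewrite divff // pnatr_eq0 -lt0n card_valid_rand_gt0.
Qed.

Lemma prob_real_inj_comp (V : finType) (f g : Omega -> V) (phi : Omega -> Omega) :
  injective phi -> (forall w, valid_rand (phi w) = valid_rand w) ->
  (forall w, f w = g (phi w)) ->
  forall v, prob_real f v = prob_real g v.
Proof.
move=> phi_inj valid_phi f_phi v; rewrite /prob_real.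
rewrite -[in RHS](card_preimset _ phi_inj); congr (_%:R / _).
by apply: eq_card => w; rewrite !inE valid_phi f_phi.
Qed.

Definition shift_sA (c : F) (w : Omega) : Omega := (sA w + c, sB w, rB w).

Lemma shift_sA_inj c : injective (shift_sA c).
Proof.
by apply: (can_inj (g := shift_sA (- c))) => [[[a b] r]]; rewrite /shift_sA addrK.
Qed.

Definition rescale (e : {ffun 'I_beta -> F}) (w : Omega) : Omega :=
  (sA w, [ffun j => (sA w + sB w j) / e j - sA w], [ffun j => rB w j / e j]).

Lemma rescaleK (e e' : {ffun 'I_beta -> F}) :
  (forall j, e j * e' j = 1) -> cancel (rescale e) (rescale e').
Proof.
move=> ee' [[a b] r]; rewrite /rescale /sA /sB /rB /=.
have div_ee' x j : x / e j / e' j = x by rewrite -mulrA -invfM ee' invr1 mulr1.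
by congr (_, _, _); apply/ffunP => j; rewrite !ffunE ?subrKC div_ee' // addrAC subrr add0r.
Qed.

Lemma rescale_inj (e : {ffun 'I_beta -> F}) : (forall j, e j != 0) -> injective (rescale e).
Proof.
move=> e_neq0; apply: (can_inj (g := rescale [ffun j => (e j)^-1])).
by apply: rescaleK => j; rewrite ffunE divff.
Qed.

Lemma valid_rand_rescale (e : {ffun 'I_beta -> F}) w :
  (forall j, e j != 0) -> valid_rand (rescale e w) = valid_rand w.
Proof.
move=> e_neq0; apply: eq_forallb => j.
by rewrite /rB ffunE mulf_eq0 invr_eq0 (negPf (e_neq0 j)) orbF.
Qed.

Lemma ole_A_rescale (e : {ffun 'I_beta -> F}) w :
  (forall j, e j != 0) -> ole_A (rescale e w) = ole_A w.
Proof.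
move=> e_neq0; congr (_, _); apply/ffunP => j.
by rewrite /sA /sB /rB /= !ffunE subrKC -[_ / e j]addr0 div_common_scale // mul0r addr0.
Qed.

Definition sim_bob (ys : {ffun 'I_beta -> Bits}) (w : Omega) : ViewB Q sigma beta :=
  (ys, ole_B w, sA w).

Definition sim_alice (x : Bits) (o : {ffun 'I_beta -> bool}) (w : Omega) :
  ViewA Q sigma beta :=
  (x, ole_A w, [ffun j => (sA w + sB w j + (~~ o j)%:R) / rB w j]).

Variable H : Bits -> F.

Definition hash_gap (x : Bits) (ys : {ffun 'I_beta -> Bits}) : {ffun 'I_beta -> F} :=
  [ffun j => if H (ys j) == H x then 1 else H (ys j) - H x].

Lemma hash_gap_neq0 x ys j : hash_gap x ys j != 0.
Proof. by rewrite ffunE; case: ifPn => [_|]; rewrite ?oner_neq0 ?subr_eq0. Qed.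

Lemma hash_gap_alice_out x ys j : no_collision H x ys ->
  (x != ys j)%:R * hash_gap x ys j = H (ys j) - H x.
Proof.
move=> no_coll; rewrite !ffunE; have [Hxy|Hxy] := eqVneq (H (ys j)) (H x).
  have -> : ys j = x by apply: no_coll; rewrite // !inE ?eqxx ?codom_f ?orbT.
  by rewrite eqxx mul0r subrr.
by rewrite (contra_neq _ Hxy) ?mul1r // => <-.
Qed.

Lemma view_alice_rescale x ys w : no_collision H x ys ->
  view_alice H x ys w = sim_alice x (alice_out x ys) (rescale (hash_gap x ys) w).
Proof.
move=> no_coll; have gap j := hash_gap_alice_out j no_coll.
have e_neq0 := hash_gap_neq0 x ys.
rewrite /view_alice /sim_alice ole_A_rescale //; congr (_, _); apply/ffunP => j.
move: (hash_gap x ys) e_neq0 gap => e e_neq0 gap.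
rewrite /msg_d /msg_c /sA /sB /rB /= !ffunE subrKC div_common_scale // gap.
by congr (_ / _); ring.
Qed.

End Simulation.

Theorem theorem3 (Q sigma beta : nat) (HQ : prime Q)
    (H : sigma.-tuple bool -> 'F_Q) :
  (* Bob's view is simulatable from his input (y_1..y_beta); he has no output *)
  (exists SimB : {ffun 'I_beta -> sigma.-tuple bool} -> {ffun ViewB Q sigma beta -> rat},
     (forall ys, is_distr (SimB ys)) /\
     (forall (x : sigma.-tuple bool) (ys : {ffun 'I_beta -> sigma.-tuple bool}),
        no_collision H x ys ->
        forall v, prob_real (view_bob H x ys) v = SimB ys v))
  /\
  (* Alice's view is simulatable from her input x and her output *)
  (exists SimA : sigma.-tuple bool -> {ffun 'I_beta -> bool} -> {ffun ViewA Q sigma beta -> rat},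
     (forall x o, is_distr (SimA x o)) /\
     (forall (x : sigma.-tuple bool) (ys : {ffun 'I_beta -> sigma.-tuple bool}),
        no_collision H x ys ->
        forall v, prob_real (view_alice H x ys) v = SimA x (alice_out x ys) v)).
Proof.
split.
- exists (fun ys => [ffun v => prob_real (sim_bob ys) v]).
  split=> [ys|x ys _ v]; first exact: prob_real_is_distr.
  rewrite ffunE; apply: (prob_real_inj_comp (@shift_sA_inj _ _ (- H x))) => //.
- exists (fun x o => [ffun v => prob_real (sim_alice x o) v]).
  split=> [x o|x ys no_coll v]; first exact: prob_real_is_distr.
  rewrite ffunE; apply: (prob_real_inj_comp (@rescale_inj _ _ _ (hash_gap_neq0 H x ys))).
  + by move=> w; apply: valid_rand_rescale => j; apply: hash_gap_neq0.
  + by move=> w; apply: view_alice_rescale.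
Qed.
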